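(* Let $d\ge3$ and $\varepsilon\in(0,1]$. Then $$P(\varepsilon,\mathcal C_d,\|\cdot\|_{L^1})\le N_{[\,]}(\varepsilon,\mathcal C_d,\|\cdot\|_{L^1})\le\frac{d^d}{d!}\Big(\frac1\varepsilon-\frac12\Big(1-\frac3d\Big)\Big)^d\le\frac{d^d}{d!}\,\varepsilon^{-d}.$$
   Context: Let $I^d=[0,1)^d$ and $\lambda^d$ be Lebesgue measure; all norms are in $L^1(I^d,\lambda^d)$. For $x\in I^d$ let $[0,x)=\prod_{i=1}^d[0,x_i)$, and let $\mathcal C_d=\{1_{[0,x)}: x\in I^d\}$ be the set of indicator functions of anchored boxes. For functions $\ell,u\in L^1$, the bracket $[\ell,u]$ is $\{f\in L^1:\ell\le f\le u\text{ pointwise}\}$; it is an $\varepsilon$-bracket if $\|u-\ell\|_{L^1}\le\varepsilon$. The bracketing number $N_{[\,]}(\varepsilon,\mathcal F,\|\cdot\|_{L^1})$ is the minimal number of $\varepsilon$-brackets whose union contains $\mathcal F$. A set $\mathcal S$ is $\varepsilon$-separated if $\|f-g\|_{L^1}>\varepsilon$ for all distinct $f,g\in\mathcal S$, and the packing number $P(\varepsilon,\mathcal F,\|\cdot\|_{L^1})$ is the maximal cardinality of an $\varepsilon$-separated subset of $\mathcal F$. *)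

From HB Require Import structures.
From mathcomp Require Import all_boot all_order all_algebra.
From mathcomp Require Import all_classical all_reals all_analysis.

Import Order.TTheory GRing.Theory Num.Theory.
Import numFieldNormedType.Exports.
Local Open Scope classical_set_scope.
Local Open Scope ring_scope.

Section Defs.
Variable R : realType.

(* points of R^d are d-tuples; R^d carries the product (Borel) sigma-algebra
   provided by MathComp-Analysis (measurable_structure.v, measure_tuple_display) *)

Definition cube (d : nat) : set (d.-tuple R) :=
  [set t | forall i : 'I_d, 0 <= tnth t i < 1].

(* the integral over I^d w.r.t. lambda^d of a nonnegative function, written as
   the iterated Lebesgue integral over [0,1) in each coordinate
   (first coordinate outermost); by Tonelli this is the integral against
   the d-dimensional Lebesgue measure for measurable nonnegative functions *)
Fixpoint cube_integral (d : nat) : (d.-tuple R -> \bar R) -> \bar R :=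
  match d with
  | 0 => fun f => f [tuple]
  | n.+1 => fun f =>
      (\int[@lebesgue_measure R]_(x in `[0%R, 1%R[) cube_integral n (fun t => f (cons_tuple x t)))%E
  end.

Definition L1norm (d : nat) (g : d.-tuple R -> R) : \bar R :=
  cube_integral d (fun t => (`|g t|)%:E).

Definition inL1 (d : nat) (g : d.-tuple R -> R) : Prop :=
  measurable_fun (cube d) g /\ (L1norm d g < +oo)%E.

Definition anchored_box (d : nat) (x : d.-tuple R) : set (d.-tuple R) :=
  [set t | forall i : 'I_d, 0 <= tnth t i < tnth x i].

Definition Cd (d : nat) : set (d.-tuple R -> R) :=
  [set f | exists2 x, cube d x & f = \1_(anchored_box d x)].

Definition in_bracket (d : nat) (l u f : d.-tuple R -> R) : Prop :=
  inL1 d f /\ forall t, cube d t -> l t <= f t <= u t.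

Definition eps_bracket (d : nat) (eps : R) (l u : d.-tuple R -> R) : Prop :=
  inL1 d l /\ inL1 d u /\ (L1norm d (fun t => (u t - l t)%R) <= eps%:E)%E.

Definition bracketing_number (d : nat) (eps : R)
    (F : set (d.-tuple R -> R)) : \bar R :=
  ereal_inf [set (k%:R)%:E | k in [set k : nat |
    exists l u : 'I_k -> d.-tuple R -> R,
      (forall i, eps_bracket d eps (l i) (u i)) /\
      (forall f, F f -> exists i, in_bracket d (l i) (u i) f)]].

Definition separated_family (d : nat) (eps : R) (F : set (d.-tuple R -> R))
    (k : nat) (S : 'I_k -> d.-tuple R -> R) : Prop :=
  injective S /\ (forall i, F (S i)) /\
  (forall i j, S i <> S j -> (eps%:E < L1norm d (fun t => (S i t - S j t)%R))%E).

Definition packing_number (d : nat) (eps : R)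
    (F : set (d.-tuple R -> R)) : \bar R :=
  ereal_sup [set (k%:R)%:E | k in [set k : nat |
    exists S : 'I_k -> d.-tuple R -> R, separated_family d eps F k S]].

End Defs.

(* Put [e = eps / d].  A sequence [js] of [d] naturals with sum at most [N]
   describes two nested anchored boxes: running through the coordinates with a
   current width [w] (initially [1]), coordinate [i] gets the upper edge
   [(w - j_i e) / w] and the lower edge [(w - (j_i + 1) e) / w], and [w] drops
   to [w - j_i e].  The upper volumes telescope to [1 - (sum js) e], and the
   volume gap is at most [d e = eps].  A greedy choice of the [j_i] places
   every [x] of [I^d] between the boxes of some [js], so with [N] about
   [d / eps - d] we get ['C(N + d, d)] eps-brackets covering [C_d], and AM-GM
   bounds ['C(N + d, d)] by [(N + (d + 1) / 2) ^ d / d!]. *)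

From HB Require Import structures.
From mathcomp Require Import all_boot all_order all_algebra.
From mathcomp Require Import all_classical all_reals all_analysis.
From mathcomp Require Import ring lra.
Import Order.TTheory GRing.Theory Num.Theory.
Import numFieldNormedType.Exports.
Local Open Scope classical_set_scope.
Local Open Scope ring_scope.

Section CubeIntegral.
Variable R : realType.
Local Notation mu := (@lebesgue_measure R).

(* The nonnegative integral is a supremum over simple minorants, so it is
   monotone without any measurability assumption (unlike [ge0_le_integral]). *)
Lemma ge0_le_integral_nomeas (D : set R) (f g : R -> \bar R) :
  (forall x, D x -> (0 <= f x)%E) -> (forall x, D x -> (f x <= g x)%E) ->
  (\int[mu]_(x in D) f x <= \int[mu]_(x in D) g x)%E.
Proof.
move=> f0 fg.
have g0 x : D x -> (0 <= g x)%E by move=> Dx; exact: le_trans (f0 _ Dx) (fg _ Dx).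
rewrite !ge0_integralE //; apply: ereal_sup_le => _ [h hf <-]; exists h => //= x.
apply: le_trans (hf x) _; rewrite /patch; case: ifP => // /set_mem; exact: fg.
Qed.

Lemma cube_cons n (x : R) (t : n.-tuple R) :
  cube R n.+1 (cons_tuple x t) <-> 0 <= x < 1 /\ cube R n t.
Proof.
split=> [ct | [x01 ct] i].
  split; first by have := ct ord0; rewrite tnth0.
  by move=> i; have := ct (lift ord0 i); rewrite tnthS.
by case: (unliftP ord0 i) => [j ->|->]; rewrite ?tnthS ?tnth0.
Qed.

Lemma cube_integral_ge0 n (f : n.-tuple R -> \bar R) :
  (forall t, cube R n t -> (0 <= f t)%E) -> (0 <= cube_integral R n f)%E.
Proof.
elim: n f => [|n IH] f f0 /=; first by apply: f0 => -[].
apply: integral_ge0 => x /=; rewrite in_itv /= => x01.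
by apply: IH => t ct; apply: f0; apply/cube_cons.
Qed.

Lemma le_cube_integral n (f g : n.-tuple R -> \bar R) :
  (forall t, cube R n t -> (0 <= f t)%E) ->
  (forall t, cube R n t -> (f t <= g t)%E) ->
  (cube_integral R n f <= cube_integral R n g)%E.
Proof.
elim: n f g => [|n IH] f g f0 fg /=; first by apply: fg => -[].
apply: ge0_le_integral_nomeas => x /=; rewrite in_itv /= => x01.
  by apply: cube_integral_ge0 => t ct; apply: f0; apply/cube_cons.
by apply: IH => t ct; [apply: f0 | apply: fg]; apply/cube_cons.
Qed.

Lemma cube_integral0 n : cube_integral R n (fun _ => 0%E) = 0%E.
Proof.
by elim: n => //= n IH; rewrite (eq_integral (fun _ => 0%E)) ?integral0.
Qed.

End CubeIntegral.

Section BoxIntegral.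
Variable R : realType.
Local Notation mu := (@lebesgue_measure R).

Definition box_volume {n} (b : n.-tuple R) := \prod_(i < n) tnth b i.

Lemma box_volume_cons n (b0 : R) (b : n.-tuple R) :
  box_volume (cons_tuple b0 b) = b0 * box_volume b.
Proof.
by rewrite /box_volume big_ord_recl tnth0; under eq_bigr do rewrite tnthS.
Qed.

Lemma box_volume_ge0 n (b : n.-tuple R) :
  (forall i, 0 <= tnth b i) -> 0 <= box_volume b.
Proof. by move=> b0; apply: prodr_ge0 => i _. Qed.

Lemma le_box_volume n (a b : n.-tuple R) :
  (forall i, 0 <= tnth a i <= tnth b i) -> box_volume a <= box_volume b.
Proof. by move=> ab; apply: ler_prod => i _. Qed.

Lemma anchored_box_cons n (b0 x : R) (b t : n.-tuple R) :
  anchored_box R n.+1 (cons_tuple b0 b) (cons_tuple x t) <->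
  0 <= x < b0 /\ anchored_box R n b t.
Proof.
split=> [bt | [xb bt] i].
  split; first by have := bt ord0; rewrite !tnth0.
  by move=> i; have := bt (lift ord0 i); rewrite !tnthS.
by case: (unliftP ord0 i) => [j ->|->]; rewrite ?tnthS ?tnth0.
Qed.

Lemma indic_anchored_box_cons n (b0 x : R) (b t : n.-tuple R) :
  \1_(anchored_box R n.+1 (cons_tuple b0 b)) (cons_tuple x t) =
  (0 <= x < b0)%R%:R * \1_(anchored_box R n b) t :> R.
Proof.
rewrite !indicE; have [xb|xb] := boolP (0 <= x < b0); last first.
  by rewrite mul0r memNset // => /anchored_box_cons[]; rewrite (negbTE xb).
rewrite mul1r; have [bt|bt] := pselect (anchored_box R n b t).
  by rewrite !mem_set //; apply/anchored_box_cons.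
by rewrite !memNset // => /anchored_box_cons[].
Qed.

Lemma indic_itv_co (u v x : R) : \1_(`[u, v[%classic) x = (u <= x < v)%R%:R :> R.
Proof.
rewrite indicE; have [uxv|uxv] := boolP (u <= x < v).
  by rewrite mem_set //= in_itv.
by rewrite memNset //= in_itv /=; apply/negP.
Qed.

Lemma lebesgue_measure_itv_co (u v : R) : u <= v -> mu `[u, v[ = (v - u)%:E.
Proof.
move=> uv; rewrite lebesgue_measure_itv /= lte_fin.
by case: ltP => // vu; rewrite (@le_anti _ _ u v) ?uv ?subrr.
Qed.

Lemma integral_unit_itv_step (a0 b0 p q : R) :
  0 <= a0 <= b0 -> b0 <= 1 -> 0 <= p -> 0 <= q ->
  (\int[mu]_(x in `[0%R, 1%R[) (p * \1_`[0%R, a0[ x + q * \1_`[a0, b0[ x)%:E =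
   (p * a0 + q * (b0 - a0))%:E)%E.
Proof.
move=> /andP[a00 ab] b1 p0 q0.
under eq_integral => x _ do rewrite EFinD.
rewrite ge0_integralD //; first last.
- apply/measurable_realfun.measurable_EFinP.
  exact: measurable_realfun.measurable_funM.
- by move=> x _; rewrite lee_fin mulr_ge0.
- apply/measurable_realfun.measurable_EFinP.
  exact: measurable_realfun.measurable_funM.
- by move=> x _; rewrite lee_fin mulr_ge0.
rewrite !integralZl_indic ?integral_indic //=; first last.
- by move=> /lt_le_trans /(_ p0); rewrite ltxx.
- by move=> /lt_le_trans /(_ q0); rewrite ltxx.
rewrite !setIidl ?lebesgue_measure_itv_co ?subr0 -?EFinM -?EFinD //.
all: by apply: subitvP; rewrite subitvE !bnd_simp ?a00 ?b1 ?(le_trans ab b1).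
Qed.

Lemma indic_box_sub_cons n (a0 b0 x k c : R) (a b t : n.-tuple R) :
  0 <= x -> a0 <= b0 ->
  k * (\1_(anchored_box R n.+1 (cons_tuple b0 b)) (cons_tuple x t) -
       c * \1_(anchored_box R n.+1 (cons_tuple a0 a)) (cons_tuple x t)) =
  k * (x < b0)%R%:R *
    (\1_(anchored_box R n b) t - c * (x < a0)%R%:R * \1_(anchored_box R n a) t).
Proof.
move=> x0 ab0; rewrite !indic_anchored_box_cons x0 /=.
have [xa|ax] := ltP x a0; [rewrite (lt_le_trans xa ab0) |];
  by case: (x < b0); rewrite /= ?mulr1n ?mulr0n; ring.
Qed.

Lemma step_indic_itv_co (a0 b0 x k c u v : R) : 0 <= x -> a0 <= b0 ->
  k * (x < b0)%R%:R * (v - c * (x < a0)%R%:R * u) =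
  k * (v - c * u) * \1_`[0%R, a0[ x + k * v * \1_`[a0, b0[ x.
Proof.
move=> x0 ab0; rewrite !indic_itv_co x0 /=.
have [xa|ax] := ltP x a0; [rewrite (lt_le_trans xa ab0) |];
  by case: (x < b0); rewrite /= ?mulr1n ?mulr0n; ring.
Qed.

(* The scalars [k] and [c] absorb the first coordinate in the induction. *)
Lemma cube_integral_indic_box_sub n (a b : n.-tuple R) (k c : R) :
  0 <= k -> 0 <= c <= 1 ->
  (forall i, 0 <= tnth a i <= tnth b i) -> (forall i, tnth b i <= 1) ->
  cube_integral R n (fun t =>
    (k * (\1_(anchored_box R n b) t - c * \1_(anchored_box R n a) t))%:E) =
  (k * (box_volume b - c * box_volume a))%:E.
Proof.
elim: n a b k c => [|n IH] a b k c k0 /andP[c0 c1] ab b1 /=.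
  have indic0 (u : 0.-tuple R) : \1_(anchored_box R 0 u) [tuple] = 1 :> R.
    by rewrite indicE mem_set // => -[].
  by rewrite !indic0 /box_volume !big_ord0 mulr1.
case/tupleP: a ab => a0 a; case/tupleP: b b1 => b0 b b1 ab.
have b01 : b0 <= 1 by have := b1 ord0; rewrite tnth0.
have {}b1 i : tnth b i <= 1 by have := b1 (lift ord0 i); rewrite tnthS.
have /andP[a00 ab0] : 0 <= a0 <= b0 by have := ab ord0; rewrite !tnth0.
have {}ab i : 0 <= tnth a i <= tnth b i by have := ab (lift ord0 i); rewrite !tnthS.
have va0 : 0 <= box_volume a by apply: box_volume_ge0 => i; case/andP: (ab i).
have vab : box_volume a <= box_volume b by apply: le_box_volume.
under eq_integral => x.
  rewrite inE /= in_itv /= => /andP[x0 _].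
  under eq_fun do rewrite indic_box_sub_cons //.
  rewrite IH ?mulr_ge0 // ?step_indic_itv_co //; last first.
    by case: (x < a0); rewrite /= ?mulr1n ?mulr0n ?mulr1 ?mulr0 ?lexx ?ler01.
  over.
have cab : c * box_volume a <= box_volume b by rewrite (le_trans _ vab) // ler_piMl.
rewrite integral_unit_itv_step ?a00 ?ab0 ?mulr_ge0 ?subr_ge0 ?(le_trans va0 vab) //.
by congr _%:E; rewrite !box_volume_cons; ring.
Qed.

Definition in_closed_cube {n} (b : n.-tuple R) := forall i, 0 <= tnth b i <= 1.

Lemma L1norm_indic_box n (b : n.-tuple R) : in_closed_cube b ->
  L1norm R n (\1_(anchored_box R n b)) = (box_volume b)%:E.
Proof.
move=> b01; rewrite /L1norm (_ : (fun t => _) = fun t =>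
  (1 * (\1_(anchored_box R n b) t - 0 * \1_(anchored_box R n b) t))%:E).
  rewrite cube_integral_indic_box_sub ?lexx ?ler01 ?mul0r ?subr0 ?mul1r //.
  - by move=> i; case/andP: (b01 i) => -> _; rewrite lexx.
  - by move=> i; case/andP: (b01 i).
by apply/funext => t; rewrite mul0r subr0 mul1r ger0_norm.
Qed.

Lemma le_indic_box n (a b : n.-tuple R) t : (forall i, tnth a i <= tnth b i) ->
  \1_(anchored_box R n a) t <= \1_(anchored_box R n b) t :> R.
Proof.
move=> ab; rewrite !indicE; have [at_|at_] := pselect (anchored_box R n a t).
  rewrite !mem_set // => i.
  by case/andP: (at_ i) => -> /lt_le_trans; apply.
by rewrite (memNset at_) ler0n.
Qed.

Lemma L1norm_indic_box_sub n (a b : n.-tuple R) :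
  (forall i, 0 <= tnth a i <= tnth b i) -> (forall i, tnth b i <= 1) ->
  L1norm R n (fun t => \1_(anchored_box R n b) t - \1_(anchored_box R n a) t) =
  (box_volume b - box_volume a)%:E.
Proof.
move=> ab b1; rewrite /L1norm (_ : (fun t => _) = fun t =>
  (1 * (\1_(anchored_box R n b) t - 1 * \1_(anchored_box R n a) t))%:E).
  by rewrite cube_integral_indic_box_sub ?lexx ?ler01 ?mul1r.
apply/funext => t; rewrite !mul1r ger0_norm // subr_ge0 le_indic_box // => i.
by case/andP: (ab i).
Qed.

Lemma L1norm0 n : L1norm R n (fun _ => 0) = 0%E.
Proof. by rewrite /L1norm; under eq_fun do rewrite normr0; exact: cube_integral0. Qed.

Lemma measurable_anchored_box n (b : n.-tuple R) : measurable (anchored_box R n b).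
Proof.
rewrite (_ : anchored_box R n b =
    \bigcap_(i in [set: 'I_n]) ((@tnth n R)^~ i @^-1` `[0%R, tnth b i[)).
  apply: fin_bigcap_measurable; first exact: finite_finset.
  move=> i _; rewrite -[X in measurable X]setTI.
  by apply: measurable_tnth => //; exact: measurable_itv.
apply/seteqP; split=> t /= bt i; first by move=> _; rewrite /= in_itv /= bt.
by have := bt i I; rewrite /= in_itv.
Qed.

Lemma inL1_indic_box n (b : n.-tuple R) : in_closed_cube b ->
  inL1 R n (\1_(anchored_box R n b)).
Proof.
move=> b01; split; last by rewrite L1norm_indic_box // ltry.
by apply: measurable_realfun.measurable_indic; exact: measurable_anchored_box.
Qed.

Lemma inL1_0 n : inL1 R n (fun _ => 0).
Proof. by split; [exact: measurable_cst | rewrite L1norm0 ltry]. Qed.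

End BoxIntegral.
Arguments box_volume {R n}.
Arguments in_closed_cube {R n}.

Section PackingBracketing.
Variables (R : realType) (d : nat) (eps : R) (F : set (d.-tuple R -> R)).

(* Two members of one eps-bracket are eps-close, so an eps-separated family
   meets each bracket of a cover at most once. *)
Lemma packing_le_bracketing_number :
  (packing_number R d eps F <= bracketing_number R d eps F)%E.
Proof.
apply: ge_ereal_sup => _ [k [S [Sinj [SF Ssep]]] <-].
apply: le_ereal_inf_tmp => _ [m [l [u [lu_eps lu_cover]]] <-].
rewrite lee_fin ler_nat.
have /choice[c cP] : forall i, exists j, in_bracket R d (l j) (u j) (S i).
  by move=> i; exact: lu_cover.
suff c_inj : injective c by have := leq_card c c_inj; rewrite !card_ord.
move=> i i' cii'; apply: contrapT => ii'.
have /Ssep : S i <> S i' by move/Sinj.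
apply/negP; rewrite -leNgt; have [_ [_ lu_le]] := lu_eps (c i).
apply: le_trans lu_le; rewrite /L1norm; apply: le_cube_integral => t ct //.
have [_ /(_ t ct) /andP[li ui]] := cP i.
have [_ /(_ t ct) /andP[li' ui']] := cP i'.
rewrite -cii' in li' ui'; rewrite /= lee_fin; apply: le_trans (ler_norm _).
by rewrite ler_norml; apply/andP; split; lra.
Qed.

Lemma bracketing_number_le_card k (l u : 'I_k -> d.-tuple R -> R) :
  (forall i, eps_bracket R d eps (l i) (u i)) ->
  (forall f, F f -> exists i, in_bracket R d (l i) (u i) f) ->
  (bracketing_number R d eps F <= k%:R%:E)%E.
Proof.
by move=> lu_eps lu_cover; apply: ereal_inf_lbound; exists k => //; exists l, u.
Qed.

End PackingBracketing.
Arguments bracketing_number_le_card {R d eps F k}.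

(* Sequences of length [d] with sum at most [N], listed by the budget [m]
   left for the tail after the head [N - m]. *)
Fixpoint bounded_sum_seqs (d N : nat) : seq (seq nat) :=
  if d is d'.+1 then
    flatten [seq [seq (N - m)%N :: s | s <- bounded_sum_seqs d' m] | m <- iota 0 N.+1]
  else [:: [::]].

Lemma bounded_sum_seqsS d N : bounded_sum_seqs d.+1 N =
  flatten [seq [seq (N - m)%N :: s | s <- bounded_sum_seqs d m] | m <- iota 0 N.+1].
Proof. by []. Qed.

Lemma mem_bounded_sum_seqs d N js :
  (js \in bounded_sum_seqs d N) = (size js == d) && (sumn js <= N)%N.
Proof.
elim: d N js => [|d IH] N [|j s] //; rewrite bounded_sum_seqsS.
  by apply/negbTE/negP => /flatten_mapP[m _ /mapP[]].
rewrite [size _]/= eqSS.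
apply/flatten_mapP/andP => [[m] | [sd jsN]].
  rewrite mem_iota ltnS => /andP[_ mN] /mapP[s' s's [-> ->]].
  move: s's; rewrite IH => /andP[-> s'm]; split=> //.
  by rewrite /= -[X in (_ <= X)%N](subnK mN) leq_add2l.
have jN : (j <= N)%N := leq_trans (leq_addr _ _) jsN.
exists (N - j)%N; first by rewrite mem_iota ltnS leq_subr.
apply/mapP; exists s; last by rewrite subKn.
by rewrite IH sd leq_subRL.
Qed.

Lemma hockey_stick d N : \sum_(0 <= m < N.+1) 'C(m + d, d) = 'C(N + d.+1, d.+1).
Proof.
elim: N => [|N IH]; first by rewrite big_nat1 add0n binn add0n binn.
by rewrite big_nat_recr //= IH !addSn !addnS binS.
Qed.

Lemma size_bounded_sum_seqs d N : size (bounded_sum_seqs d N) = 'C(N + d, d).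
Proof.
elim: d N => [|d IH] N; first by rewrite bin0.
rewrite bounded_sum_seqsS size_flatten /shape -map_comp sumnE big_map.
rewrite -hockey_stick /index_iota subn0.
by apply: eq_bigr => m _; rewrite /= size_map IH.
Qed.

Lemma bin_fact_prod N d : ('C(N + d, d) * d`! = \prod_(i < d) (N + i.+1))%N.
Proof.
elim: d => [|d IH]; first by rewrite bin0 big_ord0.
rewrite big_ord_recr /= -IH factS.
have := mul_bin_diag (N + d.+1) d; rewrite addnS /= => diag.
by rewrite mulnA [(_ * d.+1)%N]mulnC -diag; ring.
Qed.

Section BinomialBound.
Variable R : realFieldType.

Lemma sum_natr_shift N d :
  \sum_(i < d) (N + i.+1)%:R = d%:R * N%:R + d%:R * d.+1%:R / 2 :> R.
Proof.
elim: d => [|d IH]; first by rewrite big_ord0 !mul0r addr0.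
have natrS (n : nat) : n.+1%:R = n%:R + 1 :> R by rewrite -addn1 natrD.
by rewrite big_ord_recr /= IH natrD !natrS; field.
Qed.

(* AM-GM applied to the factors [N + 1, ..., N + d] of 'C(N + d, d) * d`!,
   whose mean is [N + (d + 1) / 2]. *)
Lemma binomial_le_mean_pow N d (y : R) : (0 < d)%N ->
  N%:R + d.+1%:R / 2 <= y -> 'C(N + d, d)%:R <= y ^+ d / d`!%:R.
Proof.
move=> d0 Ny.
rewrite ler_pdivlMr ?ltr0n ?fact_gt0 // -natrM bin_fact_prod natr_prod.
have factors_ge0 :
  {in [pred i : 'I_d | true], forall i : 'I_d, 0 <= (N + i.+1)%:R :> R} by [].
have [+ _] := leif_AGM factors_ge0; rewrite cardE size_enum_ord => amgm.
apply: le_trans amgm _; apply: lerXn2r; rewrite ?nnegrE.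
- by rewrite divr_ge0 // sumr_ge0.
- by apply: le_trans Ny; rewrite addr_ge0 // divr_ge0.
rewrite (eq_bigl xpredT) // sum_natr_shift.
have dR_neq0 : d%:R != 0 :> R by rewrite pnatr_eq0 -lt0n.
have -> : (d%:R * N%:R + d%:R * d.+1%:R / 2) / d%:R = N%:R + d.+1%:R / 2 :> R.
  by field.
exact: le_trans Ny.
Qed.

End BinomialBound.

Section Edges.
Variables (R : archiRealFieldType) (e : R).
Hypothesis e_gt0 : 0 < e.

Fixpoint upper_edges (w : R) (js : seq nat) : seq R :=
  if js is j :: js' then (w - j%:R * e) / w :: upper_edges (w - j%:R * e) js'
  else [::].

Fixpoint lower_edges (w : R) (js : seq nat) : seq R :=
  if js is j :: js' then (w - j.+1%:R * e) / w :: lower_edges (w - j%:R * e) js'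
  else [::].

Lemma size_upper_edges w js : size (upper_edges w js) = size js.
Proof. by elim: js w => //= j js IH w; rewrite IH. Qed.

Lemma size_lower_edges w js : size (lower_edges w js) = size js.
Proof. by elim: js w => //= j js IH w; rewrite IH. Qed.

Lemma natr_mul_ge0 n : 0 <= n%:R * e.
Proof. by rewrite mulr_ge0 // ltW. Qed.

Lemma sub_natrD_mul w j k : w - (j + k)%:R * e = w - j%:R * e - k%:R * e.
Proof. by rewrite natrD mulrDl opprD addrA. Qed.

Lemma prod_upper_edges w js : 0 < w - (sumn js)%:R * e ->
  \prod_(x <- upper_edges w js) x = (w - (sumn js)%:R * e) / w.
Proof.
elim: js w => [|j js IH] w /=.
  by rewrite big_nil mul0r subr0 => w0; rewrite divff // gt_eqF.
rewrite sub_natrD_mul => w_gt0; have := natr_mul_ge0 (sumn js).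
have := natr_mul_ge0 j => j_ge0 js_ge0.
rewrite big_cons IH //; field; rewrite gt_eqF //; lra.
Qed.

Lemma upper_edges_in01 {w js} : 0 < w - (sumn js)%:R * e ->
  forall i, (i < size js)%N -> 0 <= nth 0 (upper_edges w js) i <= 1.
Proof.
elim: js w => [|j js IH] w //=; rewrite sub_natrD_mul => w_gt0 [|i] /=; last first.
  by rewrite ltnS; exact: IH.
have := natr_mul_ge0 (sumn js); have := natr_mul_ge0 j => j_ge0 js_ge0 _.
have w0 : 0 < w by lra.
by rewrite divr_ge0 /= ?ler_pdivrMr ?mul1r; lra.
Qed.

Lemma lower_le_upper_edges {w js} : 0 <= w - (sumn js).+1%:R * e ->
  forall i, (i < size js)%N ->
  0 <= nth 0 (lower_edges w js) i <= nth 0 (upper_edges w js) i.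
Proof.
elim: js w => [|j js IH] w //= w_ge0 [|i] /=; last first.
  by rewrite ltnS; apply: IH; rewrite -sub_natrD_mul addnS.
move=> _; move: w_ge0; rewrite -addnS sub_natrD_mul => w_ge0.
have e_le : e <= (sumn js).+1%:R * e by rewrite ler_peMl ?(ltW e_gt0) // ler1n.
have := natr_mul_ge0 j => j_ge0.
have w_gt0 : 0 < w by move: e_gt0; lra.
by rewrite divr_ge0 ?ler_pM2r ?invr_gt0 //; move: e_gt0; lra.
Qed.

Lemma prod_lower_edges_in01 {w js} : 0 <= w - (sumn js).+1%:R * e ->
  0 <= \prod_(x <- lower_edges w js) x <= 1.
Proof.
move=> w_ge0; have w_gt0 : 0 < w - (sumn js)%:R * e.
  by move: w_ge0 e_gt0; lra.
have in01 x : x \in lower_edges w js -> 0 <= x <= 1.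
  case/(nthP 0) => i; rewrite size_lower_edges => ilt <-.
  have /andP[-> le_u] := lower_le_upper_edges w_ge0 _ ilt.
  by have /andP[_ u1] := upper_edges_in01 w_gt0 _ ilt; rewrite (le_trans le_u u1).
by rewrite big_seq prodr_ge0 ?prodr_ile1 // => x /in01 /andP[].
Qed.

Lemma prod_upper_sub_lower_edges {w js} : 0 <= w - (sumn js).+1%:R * e ->
  \prod_(x <- upper_edges w js) x - \prod_(x <- lower_edges w js) x <=
  (size js)%:R * e / w.
Proof.
elim: js w => [|j js IH] w /=; first by rewrite !big_nil subrr !mul0r.
rewrite -addnS sub_natrD_mul !big_cons => w_ge0.
have /andP[PL_ge0 PL_le1] := prod_lower_edges_in01 w_ge0.
have {IH}gap := IH _ w_ge0.
set w' := w - j%:R * e in w_ge0 gap *.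
set PL := \prod_(x <- _) x in PL_ge0 PL_le1 gap *.
set PU := \prod_(x <- _) x in gap *.
have e_le : e <= (sumn js).+1%:R * e by rewrite ler_peMl ?(ltW e_gt0) // ler1n.
have w'_ge : e <= w' by lra.
have w_gt0 : 0 < w by move: w'_ge (natr_mul_ge0 j) e_gt0; rewrite /w'; lra.
have -> : w - j.+1%:R * e = w' - e by rewrite /w' -addn1 sub_natrD_mul mul1r.
have -> : w' / w * PU - (w' - e) / w * PL = ((PU - PL) * w' + e * PL) / w.
  by field; rewrite gt_eqF.
have gap_w' : (PU - PL) * w' <= (size js)%:R * e.
  by rewrite -ler_pdivlMr //; move: e_gt0; lra.
have ePL : e * PL <= e by rewrite ler_piMr // ltW.
by rewrite ler_pM2r ?invr_gt0 //; lra.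
Qed.

(* Greedy choice: [j = floor (w (1 - x) / e)] places [x] between the two edges;
   if that exceeds the budget [n], spending all of it keeps [x] below the upper
   edge, and the lower edges are then not needed. *)
Lemma exists_edges_around (xs : seq R) w n : 0 < w - n%:R * e ->
  (forall i, (i < size xs)%N -> 0 <= nth 0 xs i <= 1) ->
  exists js, [/\ size js = size xs, (sumn js <= n)%N,
    forall i, (i < size xs)%N -> nth 0 xs i <= nth 0 (upper_edges w js) i &
    sumn js = n \/
    forall i, (i < size xs)%N -> nth 0 (lower_edges w js) i <= nth 0 xs i].
Proof.
elim: xs w n => [|x xs IH] w n w_gt0 xs01.
  by exists [::]; split=> //=; case: n w_gt0 => [|n] _; [left|right].
have /andP[x0 x1] : 0 <= x <= 1 by exact: (xs01 0%N).
have {}xs01 i : (i < size xs)%N -> 0 <= nth 0 xs i <= 1 by exact: (xs01 i.+1).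
have := natr_mul_ge0 n => n_ge0; have w0 : 0 < w by lra.
have [n_le|n_gt] := leP (n%:R * e) (w * (1 - x)).
  have w'_gt0 : 0 < w - n%:R * e - 0%:R * e by rewrite mul0r subr0.
  have [js [sz /[!leqn0] /eqP js0 js_up _]] := IH _ _ w'_gt0 xs01.
  exists (n :: js); rewrite /= js0 addn0; split=> //; first by rewrite sz.
    case=> [_|i] /=; last by rewrite ltnS; exact: js_up.
    by rewrite ler_pdivlMr //; lra.
  by left.
have q_ge0 : 0 <= w * (1 - x) / e by rewrite divr_ge0 ?mulr_ge0 ?subr_ge0 // ltW.
have /andP[] := truncn_itv q_ge0; set j := Num.truncn _.
rewrite ler_pdivlMr // ltr_pdivrMr // => j_le j_gt.
have jn : (j <= n)%N.
  by rewrite -(ler_nat R); apply: ltW; rewrite -(ltr_pM2r e_gt0); lra.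
have w'_gt0 : 0 < w - j%:R * e - (n - j)%:R * e by rewrite natrB // mulrBl; lra.
have [js [sz js_n js_up js_low]] := IH _ _ w'_gt0 xs01.
exists (j :: js); split=> /=.
- by rewrite sz.
- by rewrite -(subnKC jn) leq_add2l.
- case=> [_|i] /=; last by rewrite ltnS; exact: js_up.
  by rewrite ler_pdivlMr //; lra.
case: js_low => [-> | js_low]; first by left; rewrite subnKC.
right; case=> [_|i] /=; last by rewrite ltnS; exact: js_low.
by rewrite ler_pdivrMr //; lra.
Qed.

End Edges.
Arguments upper_edges {R}.
Arguments lower_edges {R}.
Arguments prod_upper_sub_lower_edges {R e} _ {w js}.
Arguments exists_edges_around {R e}.

Section CdBrackets.
Variables (R : realType) (d N : nat) (e : R).
Hypotheses (e_gt0 : 0 < e) (budget_gt0 : 0 < 1 - N%:R * e)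
  (budget_le : 1 - N%:R * e <= d%:R * e).

Definition seq_tuple (s : seq R) : d.-tuple R := [tuple nth 0 s i | i < d].

Lemma box_volume_seq_tuple s :
  size s = d -> box_volume (seq_tuple s) = \prod_(x <- s) x.
Proof.
move=> sz; rewrite /box_volume (big_nth 0) sz big_mkord.
by apply: eq_bigr => i _; rewrite tnth_mktuple.
Qed.

Definition upper_bracket (js : seq nat) : d.-tuple R -> R :=
  \1_(anchored_box R d (seq_tuple (upper_edges e 1 js))).

(* Once the budget [N] is spent the upper box has volume [1 - N e <= d e]
   by itself, and [0] serves as lower bracket. *)
Definition lower_bracket (js : seq nat) : d.-tuple R -> R :=
  if (sumn js < N)%N then \1_(anchored_box R d (seq_tuple (lower_edges e 1 js)))
  else fun _ => 0.

Lemma eps_bracket_edges js : size js = d -> (sumn js <= N)%N ->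
  eps_bracket R d (d%:R * e) (lower_bracket js) (upper_bracket js).
Proof.
move=> sz js_N.
have js_gt0 : 0 < 1 - (sumn js)%:R * e.
  by apply: lt_le_trans budget_gt0 _; rewrite lerB // ler_pM2r // ler_nat.
have up01 : in_closed_cube (seq_tuple (upper_edges e 1 js)).
  by move=> i; rewrite tnth_mktuple upper_edges_in01 // sz.
rewrite /lower_bracket; case: ifP => [js_lt | js_ge].
  have low_ge0 : 0 <= 1 - (sumn js).+1%:R * e.
    have : (sumn js).+1%:R * e <= N%:R * e by rewrite ler_pM2r // ler_nat.
    by move: budget_gt0; lra.
  have low_up i : 0 <= tnth (seq_tuple (lower_edges e 1 js)) i <=
                      tnth (seq_tuple (upper_edges e 1 js)) i.
    by rewrite !tnth_mktuple lower_le_upper_edges // sz.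
  have up1 i : tnth (seq_tuple (upper_edges e 1 js)) i <= 1.
    by case/andP: (up01 i).
  split; [|split; first exact: inL1_indic_box].
    apply: inL1_indic_box => i.
    by have /andP[-> lu] := low_up i; rewrite (le_trans lu (up1 i)).
  rewrite L1norm_indic_box_sub // !box_volume_seq_tuple
    ?size_upper_edges ?size_lower_edges // lee_fin.
  by rewrite (le_trans (prod_upper_sub_lower_edges e_gt0 low_ge0)) // sz divr1.
have js_eq : sumn js = N by apply/eqP; rewrite eqn_leq js_N leqNgt js_ge.
split; [exact: inL1_0 | split; first exact: inL1_indic_box].
under eq_fun do rewrite subr0.
rewrite L1norm_indic_box // box_volume_seq_tuple ?size_upper_edges //.
by rewrite prod_upper_edges // js_eq divr1 lee_fin.
Qed.

Lemma in_bracket_edges {x} : cube R d x ->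
  exists2 js, js \in bounded_sum_seqs d N &
    in_bracket R d (lower_bracket js) (upper_bracket js) (\1_(anchored_box R d x)).
Proof.
move=> x01; have xs01 i : (i < size x)%N -> 0 <= nth 0 x i <= 1.
  rewrite size_tuple => ilt; have /andP[x0 x1] := x01 (Ordinal ilt).
  by rewrite -(tnth_nth 0 x (Ordinal ilt)) x0 ltW.
have [js [sz js_N x_up x_low]] := exists_edges_around e_gt0 x 1 N budget_gt0 xs01.
exists js; first by rewrite mem_bounded_sum_seqs sz size_tuple eqxx.
split; first by apply: inL1_indic_box => i; case/andP: (x01 i) => -> /ltW.
move=> t _; apply/andP; split.
  rewrite /lower_bracket; case: ifP => [js_lt|_]; last by rewrite indicE ler0n.
  apply: le_indic_box => i; rewrite tnth_mktuple (tnth_nth 0).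
  case: x_low => [js_eq|]; first by rewrite js_eq ltnn in js_lt.
  by apply; rewrite size_tuple.
apply: le_indic_box => i; rewrite tnth_mktuple (tnth_nth 0).
by apply: x_up; rewrite size_tuple.
Qed.

Lemma bracketing_number_Cd_le_binomial :
  (bracketing_number R d (d%:R * e) (Cd R d) <= 'C(N + d, d)%:R%:E)%E.
Proof.
rewrite -size_bounded_sum_seqs; set seqs := bounded_sum_seqs d N.
pose js (i : 'I_(size seqs)) := nth [::] seqs i.
apply: (bracketing_number_le_card (lower_bracket \o js) (upper_bracket \o js)).
  move=> i; have := mem_nth [::] (ltn_ord i).
  by rewrite mem_bounded_sum_seqs => /andP[/eqP sz js_N]; exact: eps_bracket_edges.
move=> _ [x x01 ->]; have [js0 js0_in js0_br] := in_bracket_edges x01.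
have js0_lt : (index js0 seqs < size seqs)%N by rewrite index_mem.
by exists (Ordinal js0_lt); rewrite /= /js nth_index.
Qed.

End CdBrackets.
Arguments bracketing_number_Cd_le_binomial {R d N e}.

Lemma exists_natr_ceil (R : archiRealFieldType) (y : R) :
  0 <= y -> exists N : nat, y <= N%:R < y + 1.
Proof.
move=> y0; have /andP[] := truncn_itv y0; set m := Num.truncn y => my ym.
have [my_eq|my_neq] := eqVneq m%:R y.
  by exists m; rewrite my_eq lexx ltrDl ltr01.
by exists m.+1; rewrite ltW //= -addn1 natrD ltrD2r lt_neqAle my_neq.
Qed.

Lemma bracketing_number_Cd_le (R : realType) d (eps : R) :
  (0 < d)%N -> 0 < eps <= 1 ->
  (bracketing_number R d eps (Cd R d) <=
   ((d ^ d)%:R / d`!%:R * (eps^-1 - 2^-1 * (1 - 3%:R / d%:R)) ^+ d)%:E)%E.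
Proof.
move=> d_gt0 /andP[eps_gt0 eps_le1].
have dR_gt0 : (0 : R) < d%:R by rewrite ltr0n.
pose e := eps / d%:R; have e_gt0 : 0 < e by rewrite divr_gt0.
have e_le : e <= eps by rewrite ler_pdivrMr // ler_peMr ?(ltW eps_gt0) // ler1n.
pose y := d%:R / eps - d%:R.
have de : d%:R * e = eps by rewrite /e mulrC divfK ?gt_eqF.
have ye : y * e = 1 - eps by rewrite /y /e; field; rewrite ?gt_eqF.
have [N /andP[yN Ny]] : exists N : nat, y <= N%:R < y + 1.
  by apply: exists_natr_ceil; rewrite subr_ge0 ler_pdivlMr // ler_piMr // ltW.
have budget_gt0 : 0 < 1 - N%:R * e.
  have : N%:R * e < (y + 1) * e by rewrite ltr_pM2r.
  by rewrite mulrDl ye; lra.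
have budget_le : 1 - N%:R * e <= d%:R * e.
  have : y * e <= N%:R * e by rewrite ler_pM2r.
  by rewrite ye de; lra.
rewrite -{1}de.
apply: le_trans (bracketing_number_Cd_le_binomial e_gt0 budget_gt0 budget_le) _.
rewrite lee_fin mulrAC natrX -exprMn; apply: binomial_le_mean_pow => //.
have -> : d%:R * (eps^-1 - 2^-1 * (1 - 3 / d%:R)) = y + 1 + d.+1%:R / 2.
  by rewrite /y -addn1 natrD; field; rewrite !gt_eqF.
lra.
Qed.

Lemma bracketing_bound_le_pow (R : realFieldType) d (eps : R) :
  (3 <= d)%N -> 0 < eps <= 1 ->
  (d ^ d)%:R / d`!%:R * (eps^-1 - 2^-1 * (1 - 3%:R / d%:R)) ^+ d <=
  (d ^ d)%:R / d`!%:R * eps ^- d.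
Proof.
move=> d3 /andP[eps_gt0 eps_le1].
have d_gt0 : (0 : R) < d%:R by rewrite ltr0n (leq_trans _ d3).
have c_le1 : 3%:R / d%:R <= 1 :> R by rewrite ler_pdivrMr // mul1r ler_nat.
have c_ge0 : 0 <= 3%:R / d%:R :> R by rewrite divr_ge0.
have inv_ge1 : 1 <= eps^-1 by rewrite invf_ge1.
rewrite ler_wpM2l ?divr_ge0 // -exprVn lerXn2r ?nnegrE //; lra.
Qed.

Theorem mainTheorem5 (R : realType) (d : nat) (eps : R) :
  (3 <= d)%N -> 0 < eps <= 1 ->
  let B := ((d ^ d)%:R / (d`!)%:R) in
  [/\ (packing_number R d eps (Cd R d) <= bracketing_number R d eps (Cd R d))%E,
      (bracketing_number R d eps (Cd R d) <=
         (B * (eps^-1 - 2^-1 * (1 - 3%:R / d%:R)) ^+ d)%:E)%E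
    & B * (eps^-1 - 2^-1 * (1 - 3%:R / d%:R)) ^+ d <= B * eps ^- d].
Proof.
move=> d3 eps01 B; split.
- exact: packing_le_bracketing_number.
- by apply: bracketing_number_Cd_le => //; exact: leq_trans d3.
- exact: bracketing_bound_le_pow.
Qed.
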